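(* Let $\mathcal{T}$ be the scheme on $\mathcal{M}$ given by $\mathcal{T}(\mathbf{p})_{2i}=p_i$ and $\mathcal{T}(\mathbf{p})_{2i+1}=M_{1/2}(M^1_i,M^2_i)$, where $$M^1_i=M_{-25/128}\big(M_{3/153}(p_i,p_{i-2}),\,p_{i-1}\big),\qquad M^2_i=M_{-25/128}\big(M_{3/153}(p_{i+1},p_{i+3}),\,p_{i+2}\big).$$ Then $\delta(\mathcal{T}(\mathbf{p}))\le 0.9844\,\delta(\mathbf{p})$ for all manifold data $\mathbf{p}$, and $\mathcal{T}$ is convergent.
   Context: $\mathcal{M}$ is a geodesically complete connected Riemannian manifold with distance $d$. $M_t(p_0,p_1)$ is the geodesic average: the point at parameter $t$ on a fixed minimal geodesic $\gamma$ with $\gamma(0)=p_0,\gamma(1)=p_1$, extended beyond $[0,1]$ when needed (assumed defined for $t=-25/128$), with $d(p_0,M_t(p_0,p_1))=|t|d(p_0,p_1)$ and $d(M_t(p_0,p_1),p_1)=|1-t|d(p_0,p_1)$. Data $\mathbf{p}=(p_i)_{i\in\mathbb{Z}}$, $\delta(\mathbf{p})=\sup_id(p_i,p_{i+1})<\infty$. The scheme is the symmetric-geodesic-inductive-mean adaptation of the linear interpolatory 6-point scheme $f_{2i+1}\mapsto\frac1{256}(3f_{i-2}-25f_{i-1}+150f_i+150f_{i+1}-25f_{i+2}+3f_{i+3})$. Convergence: for every data $\mathbf{p}$ the curves $\mathrm{PG}_k(\mathcal{T}^k(\mathbf{p}))$ converge uniformly on $\mathbb{R}$, where $\mathrm{PG}_k(\mathbf{q})(t)=M_{2^kt-n}(q_n,q_{n+1})$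 for $t\in[2^{-k}n,2^{-k}(n+1))$. *)

From Stdlib Require Import Reals Lra Lia ZArith.
Open Scope R_scope.

(* Abstraction of a geodesically complete connected Riemannian manifold
   (M, d) together with the chosen geodesic average M_t(p0,p1).
   - d is a metric, and (M,d) is metrically complete (Hopf--Rinow);
   - avg t p0 p1 = gamma(t) for a fixed minimal geodesic gamma from p0 to p1:
     constant-speed, distance-realizing on [0,1];
   - the extension to t = -25/128 satisfies the distance identities of the paper. *)
Record GeoSpace := {
  pt :> Type;
  gdist : pt -> pt -> R;
  dist_refl : forall x, gdist x x = 0;
  dist_sym : forall x y, gdist x y = gdist y x;
  dist_tri : forall x y z, gdist x z <= gdist x y + gdist y z;
  dist_sep : forall x y, gdist x y = 0 -> x = y;
  complete : forall u : nat -> pt,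
    (forall eps, 0 < eps -> exists N, forall m n, (N <= m)%nat -> (N <= n)%nat ->
        gdist (u m) (u n) < eps) ->
    exists l, forall eps, 0 < eps -> exists N, forall n, (N <= n)%nat -> gdist (u n) l < eps;
  avg : R -> pt -> pt -> pt;
  avg_0 : forall p0 p1, avg 0 p0 p1 = p0;
  avg_1 : forall p0 p1, avg 1 p0 p1 = p1;
  avg_geodesic : forall p0 p1 s t, 0 <= s <= 1 -> 0 <= t <= 1 ->
    gdist (avg s p0 p1) (avg t p0 p1) = Rabs (s - t) * gdist p0 p1;
  avg_ext_l : forall p0 p1,
    gdist p0 (avg (-25/128) p0 p1) = Rabs (-25/128) * gdist p0 p1;
  avg_ext_r : forall p0 p1,
    gdist (avg (-25/128) p0 p1) p1 = Rabs (1 - -25/128) * gdist p0 p1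
}.

Arguments gdist {g} _ _.
Arguments avg {g} _ _ _.

Definition is_delta {G : GeoSpace} (p : Z -> G) (D : R) : Prop :=
  is_lub (fun x => exists i : Z, x = gdist (p i) (p (i + 1)%Z)) D.

Definition finite_delta {G : GeoSpace} (p : Z -> G) : Prop :=
  exists B, forall i : Z, gdist (p i) (p (i + 1)%Z) <= B.

Definition M1 {G : GeoSpace} (p : Z -> G) (i : Z) : G :=
  avg (-25/128) (avg (3/153) (p i) (p (i - 2)%Z)) (p (i - 1)%Z).
Definition M2 {G : GeoSpace} (p : Z -> G) (i : Z) : G :=
  avg (-25/128) (avg (3/153) (p (i + 1)%Z) (p (i + 3)%Z)) (p (i + 2)%Z).

Definition scheme {G : GeoSpace} (p : Z -> G) (j : Z) : G :=
  if Z.even j then p (Z.div2 j)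
  else avg (1/2) (M1 p (Z.div2 j)) (M2 p (Z.div2 j)).

Definition PG {G : GeoSpace} (k : nat) (q : Z -> G) (t : R) : G :=
  let n := Int_part (2 ^ k * t) in
  avg (2 ^ k * t - IZR n) (q n) (q (n + 1)%Z).

(* Each new point of [scheme p] lies within [63/64 * delta(p)] of its two
   neighbours: the one-sided points [M1], [M2] stay within [31/128 * delta(p)]
   of [p i] and [p (i+1)], and taking their geodesic midpoint costs at most
   [(2 * 31/128 + 1/2) * delta(p)].  Since [63/64 < 0.9844] this gives the
   contraction of [delta].  For an interpolatory scheme contracting [delta] by
   [c < 1], the piecewise-geodesic curves of two consecutive refinement levels
   differ by at most [3 * c^k * delta(p)], so they form a uniformly Cauchy
   sequence, which converges by completeness of the manifold. *)
From Pilot Require Import Defs.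
From Stdlib Require Import Reals ZArith Lra Lia IndefiniteDescription.
Open Scope R_scope.

Section GeoSpaceFacts.

Context {G : GeoSpace}.

Lemma gdist_ge0 (x y : G) : 0 <= gdist x y.
Proof.
  pose proof (Defs.dist_tri G x y x) as H.
  rewrite Defs.dist_refl, (Defs.dist_sym G y x) in H; lra.
Qed.

Lemma gdist_avg_l (a b : G) s : 0 <= s <= 1 -> gdist a (avg s a b) = s * gdist a b.
Proof.
  intros Hs.
  pose proof (avg_geodesic G a b 0 s ltac:(lra) Hs) as H.
  rewrite avg_0 in H; rewrite H, Rabs_left1 by lra; ring.
Qed.

Lemma gdist_avg_r (a b : G) s : 0 <= s <= 1 -> gdist (avg s a b) b = (1 - s) * gdist a b.
Proof.
  intros Hs.
  pose proof (avg_geodesic G a b s 1 Hs ltac:(lra)) as H.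
  rewrite avg_1 in H; rewrite H, Rabs_left1 by lra; ring.
Qed.

Lemma gdist_avg_l_le (a b : G) s B :
  0 <= s <= 1 -> gdist a b <= B -> gdist a (avg s a b) <= B.
Proof.
  intros Hs HB; rewrite gdist_avg_l by exact Hs.
  pose proof (gdist_ge0 a b); nra.
Qed.

Lemma gdist_avg_ext (a b : G) : gdist a (avg (-25/128) a b) = 25/128 * gdist a b.
Proof. rewrite avg_ext_l, Rabs_left by lra; lra. Qed.

Lemma is_delta_exists_le (p : Z -> G) B :
  (forall i, gdist (p i) (p (i + 1)%Z) <= B) -> exists D, is_delta p D /\ D <= B.
Proof.
  intros Hp.
  set (E := fun x => exists i : Z, x = gdist (p i) (p (i + 1)%Z)).
  assert (HB : is_upper_bound E B) by (intros x [i ->]; apply Hp).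
  destruct (completeness E (ex_intro _ B HB) (ex_intro _ _ (ex_intro _ 0%Z eq_refl)))
    as [D HD].
  exists D; split; [exact HD | apply HD, HB].
Qed.

Lemma uniformly_cauchy_limit (F : nat -> R -> G) (e : nat -> R) :
  (forall eps, 0 < eps -> exists N, forall n, (N <= n)%nat -> e n < eps) ->
  (forall k n t, (k <= n)%nat -> gdist (F k t) (F n t) <= e k) ->
  exists f : R -> G, forall eps, 0 < eps -> exists K : nat,
    forall k, (K <= k)%nat -> forall t, gdist (F k t) (f t) < eps.
Proof.
  intros He HF.
  assert (Hlim : forall t, exists l : G, forall eps, 0 < eps ->
            exists N, forall n, (N <= n)%nat -> gdist (F n t) l < eps).
  { intros t; apply (complete G (fun n => F n t)).
    intros eps Heps; destruct (He (eps / 2) ltac:(lra)) as [N HN].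
    exists N; intros m n Hm Hn.
    pose proof (HF N m t Hm); pose proof (HF N n t Hn); pose proof (HN N (le_n N)).
    pose proof (Defs.dist_tri G (F m t) (F N t) (F n t)).
    rewrite (Defs.dist_sym G (F m t) (F N t)) in *; lra. }
  exists (fun t => proj1_sig (constructive_indefinite_description _ (Hlim t))).
  intros eps Heps; destruct (He (eps / 2) ltac:(lra)) as [K HK].
  exists K; intros k Hk t.
  destruct (constructive_indefinite_description _ (Hlim t)) as [l Hl]; simpl.
  destruct (Hl (eps / 2) ltac:(lra)) as [N HN].
  pose proof (HN (k + N)%nat ltac:(lia)); pose proof (HF k (k + N)%nat t ltac:(lia)).
  pose proof (HK k Hk); pose proof (Defs.dist_tri G (F k t) (F (k + N)%nat t) l); lra.
Qed.

Lemma geometric_vanishes a c :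
  0 <= c < 1 -> forall eps, 0 < eps -> exists N, forall n, (N <= n)%nat -> a * c ^ n < eps.
Proof.
  intros Hc eps Heps.
  destruct (pow_lt_1_zero c ltac:(rewrite Rabs_right; lra) (eps / (Rabs a + 1)))
    as [N HN].
  { apply Rdiv_lt_0_compat; [lra | pose proof (Rabs_pos a); lra]. }
  exists N; intros n Hn; specialize (HN n Hn).
  assert (Hpow : 0 <= c ^ n) by (apply pow_le; lra).
  rewrite Rabs_right in HN by lra.
  apply (Rmult_lt_compat_r (Rabs a + 1)) in HN; [| pose proof (Rabs_pos a); lra].
  unfold Rdiv in HN; rewrite Rmult_assoc, Rinv_l, Rmult_1_r in HN
    by (pose proof (Rabs_pos a); lra).
  pose proof (Rle_abs a); nra.
Qed.

Lemma geometric_uniform_limit (F : nat -> R -> G) a c :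
  0 <= c < 1 -> (forall k t, gdist (F k t) (F (S k) t) <= a * c ^ k) ->
  exists f : R -> G, forall eps, 0 < eps -> exists K : nat,
    forall k, (K <= k)%nat -> forall t, gdist (F k t) (f t) < eps.
Proof.
  intros Hc HF.
  set (tail k := a / (1 - c) * c ^ k).
  assert (Htail : forall k m t, gdist (F k t) (F (k + m)%nat t) <= tail k - tail (k + m)%nat).
  { intros k m t; induction m as [|m IH].
    - rewrite Nat.add_0_r, Defs.dist_refl; lra.
    - rewrite Nat.add_succ_r.
      pose proof (Defs.dist_tri G (F k t) (F (k + m)%nat t) (F (S (k + m)) t)).
      pose proof (HF (k + m)%nat t).
      assert (tail (k + m)%nat - tail (S (k + m)) = a * c ^ (k + m))
        by (unfold tail; simpl pow; field; lra).
      lra. }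
  apply (uniformly_cauchy_limit F tail); [apply geometric_vanishes, Hc |].
  intros k n t Hkn; replace n with (k + (n - k))%nat by lia.
  pose proof (Htail k (n - k)%nat t) as H.
  assert (Ha : 0 <= a).
  { pose proof (HF 0%nat t); pose proof (gdist_ge0 (F 0%nat t) (F 1%nat t)).
    simpl pow in *; lra. }
  assert (0 <= tail (k + (n - k))%nat).
  { unfold tail, Rdiv; apply Rmult_le_pos; [| apply pow_le; lra].
    apply Rmult_le_pos; [lra | apply Rlt_le, Rinv_0_lt_compat; lra]. }
  lra.
Qed.

End GeoSpaceFacts.

Section Scheme.

Context {G : GeoSpace}.

Lemma gdist_one_sided_le (x y z : G) B :
  gdist x y <= B -> gdist y z <= B ->
  gdist x (avg (-25/128) (avg (3/153) x z) y) <= 31/128 * B.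
Proof.
  intros Hxy Hyz.
  set (A := avg (3/153) x z).
  assert (HxA : gdist x A <= 3/153 * (2 * B)).
  { unfold A; rewrite gdist_avg_l by lra.
    pose proof (Defs.dist_tri G x y z); pose proof (gdist_ge0 x z); nra. }
  pose proof (gdist_avg_ext A y).
  pose proof (Defs.dist_tri G A x y); pose proof (Defs.dist_tri G x A (avg (-25/128) A y)).
  rewrite (Defs.dist_sym G A x) in *; lra.
Qed.

Lemma gdist_mid_l (x y u v : G) :
  gdist x (avg (1/2) u v) <= 3/2 * gdist x u + 1/2 * gdist x y + 1/2 * gdist y v.
Proof.
  pose proof (gdist_avg_l u v (1/2) ltac:(lra)).
  pose proof (Defs.dist_tri G x u (avg (1/2) u v)).
  pose proof (Defs.dist_tri G u x v); pose proof (Defs.dist_tri G x y v).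
  rewrite (Defs.dist_sym G u x) in *; lra.
Qed.

Lemma gdist_mid_r (x y u v : G) :
  gdist (avg (1/2) u v) y <= 1/2 * gdist x u + 1/2 * gdist x y + 3/2 * gdist y v.
Proof.
  pose proof (gdist_avg_r u v (1/2) ltac:(lra)).
  pose proof (Defs.dist_tri G (avg (1/2) u v) v y).
  pose proof (Defs.dist_tri G u x v); pose proof (Defs.dist_tri G x y v).
  rewrite (Defs.dist_sym G u x), (Defs.dist_sym G v y) in *; lra.
Qed.

Lemma scheme_even (p : Z -> G) i : scheme p (2 * i)%Z = p i.
Proof.
  unfold scheme; rewrite Z.even_even; f_equal.
  rewrite Z.div2_div, Z.mul_comm, Z.div_mul; lia.
Qed.

Lemma scheme_odd (p : Z -> G) i :
  scheme p (2 * i + 1)%Z = avg (1/2) (M1 p i) (M2 p i).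
Proof.
  unfold scheme; rewrite Z.even_odd.
  replace (Z.div2 (2 * i + 1)) with i
    by (rewrite Z.div2_div; apply Z.div_unique with 1%Z; lia).
  reflexivity.
Qed.

Lemma scheme_odd_gdist_le (p : Z -> G) B :
  (forall i, gdist (p i) (p (i + 1)%Z) <= B) -> forall i,
  gdist (p i) (scheme p (2 * i + 1)%Z) <= 63/64 * B /\
  gdist (scheme p (2 * i + 1)%Z) (p (i + 1)%Z) <= 63/64 * B.
Proof.
  intros Hp i; rewrite scheme_odd.
  assert (Hshift : forall j k, (k = j + 1)%Z -> gdist (p j) (p k) <= B)
    by (intros j k ->; apply Hp).
  assert (H1 : gdist (p i) (M1 p i) <= 31/128 * B).
  { apply gdist_one_sided_le.
    - rewrite Defs.dist_sym; apply Hshift; lia.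
    - rewrite Defs.dist_sym; apply Hshift; lia. }
  assert (H2 : gdist (p (i + 1)%Z) (M2 p i) <= 31/128 * B).
  { apply gdist_one_sided_le; apply Hshift; lia. }
  pose proof (gdist_mid_l (p i) (p (i + 1)%Z) (M1 p i) (M2 p i)).
  pose proof (gdist_mid_r (p i) (p (i + 1)%Z) (M1 p i) (M2 p i)).
  pose proof (Hp i); split; lra.
Qed.

Lemma scheme_contraction (p : Z -> G) B :
  (forall i, gdist (p i) (p (i + 1)%Z) <= B) -> forall j,
  gdist (scheme p j) (scheme p (j + 1)%Z) <= 63/64 * B.
Proof.
  intros Hp j; destruct (Z.Even_or_Odd j) as [[i ->] | [i ->]].
  - rewrite scheme_even; apply (scheme_odd_gdist_le p B Hp i).
  - replace (2 * i + 1 + 1)%Z with (2 * (i + 1))%Z by lia.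
    rewrite scheme_even; apply (scheme_odd_gdist_le p B Hp i).
Qed.

End Scheme.

Lemma Int_part_double x :
  Int_part (2 * x) = (2 * Int_part x)%Z \/ Int_part (2 * x) = (2 * Int_part x + 1)%Z.
Proof.
  destruct (base_Int_part x) as [Hx1 Hx2]; destruct (base_Int_part (2 * x)) as [H2x1 H2x2].
  assert (Hlt : IZR (Int_part (2 * x)) < IZR (2 * Int_part x + 2))
    by (rewrite plus_IZR, mult_IZR; lra).
  assert (Hgt : IZR (2 * Int_part x) < IZR (Int_part (2 * x) + 1))
    by (rewrite plus_IZR, mult_IZR; lra).
  apply lt_IZR in Hlt; apply lt_IZR in Hgt; lia.
Qed.

Section InterpolatoryConvergence.

Context {G : GeoSpace}.
Variable T : (Z -> G) -> Z -> G.
Variable c : R.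
Hypothesis c_range : 0 <= c < 1.
Hypothesis T_interpolatory : forall q i, T q (2 * i)%Z = q i.
Hypothesis T_contraction : forall q B,
  (forall i, gdist (q i) (q (i + 1)%Z) <= B) ->
  forall j, gdist (T q j) (T q (j + 1)%Z) <= c * B.

Lemma gdist_PG_refine (q : Z -> G) B k t :
  (forall i, gdist (q i) (q (i + 1)%Z) <= B) ->
  gdist (PG k q t) (PG (S k) (T q) t) <= 3 * B.
Proof.
  intros Hq; pose proof (T_contraction q B Hq) as HTq.
  assert (HcB : forall j, gdist (T q j) (T q (j + 1)%Z) <= B).
  { intros j; pose proof (HTq j); pose proof (gdist_ge0 (q 0%Z) (q (0 + 1)%Z)).
    pose proof (Hq 0%Z); nra. }
  unfold PG; replace (2 ^ S k * t) with (2 * (2 ^ k * t)) by (simpl; ring).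
  set (x := 2 ^ k * t).
  destruct (base_Int_part x); destruct (base_Int_part (2 * x)).
  set (n := Int_part x) in *; set (m := Int_part (2 * x)) in *.
  set (P := avg (x - IZR n) (q n) (q (n + 1)%Z)).
  set (P' := avg (2 * x - IZR m) (T q m) (T q (m + 1)%Z)).
  assert (HP : gdist (q n) P <= B) by (apply gdist_avg_l_le; [lra | apply Hq]).
  assert (HP' : gdist (T q m) P' <= B) by (apply gdist_avg_l_le; [lra | apply HcB]).
  (* [m] is [2n] or [2n+1], so the refined node [T q m] is [q n] or its right neighbour. *)
  assert (Hnode : gdist (q n) (T q m) <= B).
  { destruct (Int_part_double x) as [Hm | Hm]; fold n m in Hm; rewrite Hm.
    - rewrite T_interpolatory, Defs.dist_refl; apply (Rle_trans _ _ _ (gdist_ge0 _ _) (Hq n)).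
    - specialize (HcB (2 * n)%Z); rewrite T_interpolatory in HcB; exact HcB. }
  pose proof (Defs.dist_tri G P (q n) P'); pose proof (Defs.dist_tri G (q n) (T q m) P').
  rewrite (Defs.dist_sym G P (q n)) in *; lra.
Qed.

Lemma iter_gdist_le (p : Z -> G) B :
  (forall i, gdist (p i) (p (i + 1)%Z) <= B) -> forall k i,
  gdist (Nat.iter k T p i) (Nat.iter k T p (i + 1)%Z) <= c ^ k * B.
Proof.
  intros Hp k; induction k as [|k IH]; intros i.
  - simpl; rewrite Rmult_1_l; apply Hp.
  - simpl Nat.iter; simpl pow; rewrite Rmult_assoc; apply T_contraction, IH.
Qed.

Lemma PG_iter_uniform_limit (p : Z -> G) :
  finite_delta p ->
  exists f : R -> G, forall eps, 0 < eps -> exists K : nat,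
    forall k, (K <= k)%nat -> forall t, gdist (PG k (Nat.iter k T p) t) (f t) < eps.
Proof.
  intros [B Hp].
  apply (geometric_uniform_limit (fun k t => PG k (Nat.iter k T p) t) (3 * B) c c_range).
  intros k t; replace (3 * B * c ^ k) with (3 * (c ^ k * B)) by ring.
  apply gdist_PG_refine, iter_gdist_le, Hp.
Qed.

End InterpolatoryConvergence.

Theorem mainTheorem8 (G : GeoSpace) :
  (forall (p : Z -> G) (D : R), is_delta p D ->
     exists D', is_delta (scheme p) D' /\ D' <= (9844 / 10000) * D) /\
  (forall p : Z -> G, finite_delta p ->
     exists f : R -> G, forall eps, 0 < eps -> exists K : nat,
       forall k : nat, (K <= k)%nat -> forall t : R,
         gdist (PG k (Nat.iter k scheme p) t) (f t) < eps).
Proof.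
  split.
  - intros p D [HD _].
    assert (Hp : forall i, gdist (p i) (p (i + 1)%Z) <= D) by (intros i; apply HD; eauto).
    destruct (is_delta_exists_le (scheme p) _ (scheme_contraction p D Hp))
      as [D' [HD' Hle]].
    exists D'; split; [exact HD'|].
    pose proof (gdist_ge0 (p 0%Z) (p (0 + 1)%Z)); pose proof (Hp 0%Z); lra.
  - apply (PG_iter_uniform_limit scheme (63/64)); [lra | apply scheme_even |].
    apply scheme_contraction.
Qed.
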